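(* Let $X,Y$ be vector spaces in separating duality, $X$ with $\sigma(X,Y)$. Let $f:X\to(-\infty,+\infty]$ be convex, lower semicontinuous, with $\mathrm{dom}\,f$ contained in a compact set, and let $V\subset X$ be closed and convex. If $V\cap\mathrm{dom}\,f\ne\emptyset$ or $V\cap\mathrm{cl}\,\mathrm{dom}\,f=\emptyset$, then $$\inf_{x\in V}f(x)=-\inf_{y\in Y}\big(f^*(y)+\xi_V^*(-y)\big)\in(-\infty,\infty].$$ If $V$ satisfies neither condition, then for every closed convex $W\subset\mathrm{int}\,V$, $$\inf_{x\in W}f(x)=-\inf_{y\in Y}\big(f^*(y)+\xi_W^*(-y)\big)=+\infty.$$
   Context: $\xi_C$: convex indicator of $C$ ($0$ on $C$, $+\infty$ outside); $\xi_C^*(y)=\sup_{x\in C}\langle x,y\rangle$ its support function. $f^*(y)=\sup_x\{\langle x,y\rangle-f(x)\}$. $\mathrm{dom}\,f=\{f<\infty\}$. *)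

From Stdlib Require Import Reals Lra List ClassicalEpsilon.
Open Scope R_scope.

Record VS := {
  car :> Type;
  vadd : car -> car -> car;
  vscal : R -> car -> car;
  vzero : car;
  vopp : car -> car;
  vaddA : forall x y z, vadd x (vadd y z) = vadd (vadd x y) z;
  vaddC : forall x y, vadd x y = vadd y x;
  vadd0 : forall x, vadd x vzero = x;
  vaddN : forall x, vadd x (vopp x) = vzero;
  vscal1 : forall x, vscal 1 x = x;
  vscalA : forall a b x, vscal a (vscal b x) = vscal (a * b) x;
  vscalDr : forall a x y, vscal a (vadd x y) = vadd (vscal a x) (vscal a y);
  vscalDl : forall a b x, vscal (a + b) x = vadd (vscal a x) (vscal b x)
}.
Arguments vadd {_}. Arguments vscal {_}. Arguments vzero {_}. Arguments vopp {_}.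

Record Duality (X Y : VS) := {
  pair : X -> Y -> R;
  pair_addl : forall x x' y, pair (vadd x x') y = pair x y + pair x' y;
  pair_scall : forall a x y, pair (vscal a x) y = a * pair x y;
  pair_addr : forall x y y', pair x (vadd y y') = pair x y + pair x y';
  pair_scalr : forall a x y, pair x (vscal a y) = a * pair x y;
  pair_sepX : forall x, (forall y, pair x y = 0) -> x = vzero;
  pair_sepY : forall y, (forall x, pair x y = 0) -> y = vzero
}.
Arguments pair {_ _}.

Section Weak.
Context {X Y : VS} (D : Duality X Y).

Definition wopen (U : X -> Prop) : Prop :=
  forall x, U x -> exists (ys : list Y) (eps : R), 0 < eps /\
    forall z, (forall y, In y ys -> Rabs (pair D (vadd z (vopp x)) y) < eps) -> U z.

Definition wclosed (C : X -> Prop) : Prop := wopen (fun x => ~ C x).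

Definition wcompact (K : X -> Prop) : Prop :=
  forall (I : Type) (U : I -> X -> Prop),
    (forall i, wopen (U i)) -> (forall x, K x -> exists i, U i x) ->
    exists l : list I, forall x, K x -> exists i, In i l /\ U i x.

Definition winterior (A : X -> Prop) (x : X) : Prop :=
  exists U, wopen U /\ U x /\ forall z, U z -> A z.

Definition wclosure (A : X -> Prop) (x : X) : Prop :=
  forall U, wopen U -> U x -> exists z, U z /\ A z.
End Weak.

Definition convex_set {X : VS} (C : X -> Prop) : Prop :=
  forall x z t, 0 <= t <= 1 -> C x -> C z -> C (vadd (vscal t x) (vscal (1 - t) z)).

Inductive ereal := Fin (r : R) | PInf | NInf.

Definition ele (a b : ereal) : Prop :=
  match a, b with
  | NInf, _ => True
  | _, PInf => True
  | Fin x, Fin y => x <= y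
  | _, _ => False
  end.

Definition Eopp (a : ereal) : ereal :=
  match a with Fin x => Fin (- x) | PInf => NInf | NInf => PInf end.

(* addition; the convention chosen for the undefined sum is
   (+oo) + (-oo) = (-oo) + (+oo) = -oo (it never arises in the theorem) *)
Definition Eplus (a b : ereal) : ereal :=
  match a, b with
  | Fin x, Fin y => Fin (x + y)
  | NInf, _ | _, NInf => NInf
  | _, _ => PInf
  end.

Definition is_Esup (S : ereal -> Prop) (s : ereal) : Prop :=
  (forall e, S e -> ele e s) /\ (forall u, (forall e, S e -> ele e u) -> ele s u).
Definition is_Einf (S : ereal -> Prop) (s : ereal) : Prop :=
  (forall e, S e -> ele s e) /\ (forall u, (forall e, S e -> ele u e) -> ele u s).

(* supremum / infimum of a set of extended reals (they always exist; the
   definition uses Hilbert's epsilon) *)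
Definition Esup (S : ereal -> Prop) : ereal := epsilon (inhabits NInf) (is_Esup S).
Definition Einf (S : ereal -> Prop) : ereal := epsilon (inhabits PInf) (is_Einf S).

Definition dom {X : VS} (f : X -> ereal) (x : X) : Prop := f x <> PInf.

Definition convex_fun {X : VS} (f : X -> ereal) : Prop :=
  forall x z t a b, 0 <= t <= 1 -> f x = Fin a -> f z = Fin b ->
    ele (f (vadd (vscal t x) (vscal (1 - t) z))) (Fin (t * a + (1 - t) * b)).

Definition wlsc {X Y : VS} (D : Duality X Y) (f : X -> ereal) : Prop :=
  forall r : R, wclosed D (fun x => ele (f x) (Fin r)).

Definition inf_over {T : Type} (A : T -> Prop) (g : T -> ereal) : ereal :=
  Einf (fun e => exists x, A x /\ e = g x).

Definition conjugate {X Y : VS} (D : Duality X Y) (f : X -> ereal) (y : Y) : ereal :=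
  Esup (fun e => exists x, e = Eplus (Fin (pair D x y)) (Eopp (f x))).

(* support function xi_C^*(y) = sup_{x in C} <x,y>, the conjugate of the indicator *)
Definition support {X Y : VS} (D : Duality X Y) (C : X -> Prop) (y : Y) : ereal :=
  Esup (fun e => exists x, C x /\ e = Fin (pair D x y)).

(* Weak duality  -inf_V f <= f^*(y) + xi_V^*(-y)  holds by the definitions.
   For the converse we show: whenever r' < r <= inf_V f there is y in Y with
   f^*(y) + xi_V^*(-y) <= -r'.  The only infinite-dimensional input is
   compactness: it provides finitely many y_1, ..., y_n and eps > 0 such that
   every x of a set A contained in the compact set (a sublevel set of f, or
   dom f) differs from every v in V by at least eps in some coordinate
   <., y_i>.  The data (<x - v, y_i>)_i, completed by an epigraph coordinate,
   form a convex set of R^(n+1) at distance >= eps from the origin; the point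
   of its closure closest to the origin separates it strictly from the origin
   (Euclidean closest-point argument).  This yields a functional in span{y_i}
   which, depending on whether V meets dom f or misses its closure, is turned
   into the required y.  The second statement of the theorem is the first
   one applied to W, which misses the closure of dom f since it lies in the
   interior of V, and where f is identically +oo. *)

From Stdlib Require Import Reals Lra Lia List Classical ClassicalEpsilon.
Local Open Scope R_scope.

Lemma ele_trans a b c : ele a b -> ele b c -> ele a c.
Proof. destruct a, b, c; simpl; intros; auto; try lra; contradiction. Qed.

Lemma ele_antisym a b : ele a b -> ele b a -> a = b.
Proof. destruct a, b; simpl; intros; try contradiction; auto. f_equal; lra. Qed.

Lemma ele_opp a b : ele a b -> ele (Eopp b) (Eopp a).
Proof. destruct a, b; simpl; auto; lra. Qed.

Lemma Eopp_inv a : Eopp (Eopp a) = a.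
Proof. destruct a; simpl; auto; f_equal; ring. Qed.

Lemma Eplus_mono a b c d : ele a c -> ele b d -> ele (Eplus a b) (Eplus c d).
Proof. destruct a, b, c, d; simpl; intros; auto; try lra; try contradiction. Qed.

Lemma ele_PInf a : ele a PInf.
Proof. destruct a; simpl; auto. Qed.

Lemma real_sup (P : R -> Prop) (r0 b : R) : P r0 -> (forall r, P r -> r <= b) ->
  exists s, (forall r, P r -> r <= s) /\ (forall c, (forall r, P r -> r <= c) -> s <= c).
Proof.
  intros H0 Hb. destruct (completeness P) as [m [Hm1 Hm2]].
  - exists b; intros x Hx; auto.
  - exists r0; auto.
  - exists m; split; auto.
Qed.

Lemma real_inf (P : R -> Prop) (r0 b : R) : P r0 -> (forall r, P r -> b <= r) ->
  exists s, (forall r, P r -> s <= r) /\ (forall c, (forall r, P r -> c <= r) -> c <= s).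
Proof.
  intros H0 Hb.
  destruct (real_sup (fun r => P (- r)) (- r0) (- b)) as [s [Hs1 Hs2]].
  - rewrite Ropp_involutive; auto.
  - intros r Hr. specialize (Hb _ Hr). lra.
  - exists (- s). split.
    + intros r Hr. assert (- r <= s) by (apply Hs1; rewrite Ropp_involutive; auto). lra.
    + intros c Hc. assert (s <= - c); [|lra].
      apply Hs2. intros r Hr. specialize (Hc _ Hr). lra.
Qed.

Lemma Esup_exists (S : ereal -> Prop) : exists s, is_Esup S s.
Proof.
  destruct (classic (S PInf)) as [HP|HP].
  { exists PInf. split; [intros e _; apply ele_PInf | intros u Hu; apply Hu; auto]. }
  destruct (classic (exists r, S (Fin r))) as [[r0 Hr0]|HF].
  - destruct (classic (exists b, forall r, S (Fin r) -> r <= b)) as [[b Hb]|Hunb].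
    + destruct (real_sup (fun r => S (Fin r)) r0 b Hr0 Hb) as [m [Hm1 Hm2]].
      exists (Fin m). split.
      * intros [r| |] He; simpl; auto.
      * intros [r| |] Hu; simpl; auto.
        -- apply Hm2. intros x Hx. exact (Hu _ Hx).
        -- exact (Hu _ Hr0).
    + exists PInf. split; [intros e _; apply ele_PInf|].
      intros [r| |] Hu; simpl; auto.
      * apply Hunb. exists r. intros x Hx. exact (Hu _ Hx).
      * exact (Hu _ Hr0).
  - exists NInf. split; [|intros u _; simpl; auto].
    intros [r| |] He; simpl; auto. apply HF; eauto.
Qed.

Lemma Einf_exists (S : ereal -> Prop) : exists s, is_Einf S s.
Proof.
  destruct (Esup_exists (fun e => S (Eopp e))) as [s [H1 H2]].
  exists (Eopp s). split.
  - intros e He. rewrite <- (Eopp_inv e). apply ele_opp, H1. rewrite Eopp_inv; auto.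
  - intros u Hu. rewrite <- (Eopp_inv u). apply ele_opp, H2.
    intros e He. rewrite <- (Eopp_inv e). apply ele_opp, Hu; auto.
Qed.

Lemma Esup_ub S e : S e -> ele e (Esup S).
Proof. apply (proj1 (epsilon_spec _ _ (Esup_exists S))). Qed.

Lemma Esup_least S u : (forall e, S e -> ele e u) -> ele (Esup S) u.
Proof. apply (proj2 (epsilon_spec _ _ (Esup_exists S))). Qed.

Lemma Einf_lb S e : S e -> ele (Einf S) e.
Proof. apply (proj1 (epsilon_spec _ _ (Einf_exists S))). Qed.

Lemma Einf_greatest S u : (forall e, S e -> ele u e) -> ele u (Einf S).
Proof. apply (proj2 (epsilon_spec _ _ (Einf_exists S))). Qed.

Lemma Einf_unique S s : is_Einf S s -> Einf S = s.
Proof.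
  intros [H1 H2]. apply ele_antisym.
  - apply H2. intros; apply Einf_lb; auto.
  - apply Einf_greatest; auto.
Qed.

Lemma inf_over_PInf {T} (C : T -> Prop) (g : T -> ereal) :
  (forall x, C x -> g x = PInf) -> inf_over C g = PInf.
Proof.
  intros H. apply ele_antisym; [apply ele_PInf|].
  apply Einf_greatest. intros e [x [Hx ->]]. rewrite (H x Hx). simpl; auto.
Qed.

(* Criterion used to close the duality identity: g lies above -phi and
   comes below -r' whenever r' < r <= phi. *)
Lemma inf_over_eq_Eopp {T} (g : T -> ereal) (phi : ereal) :
  (forall y, ele (Eopp phi) (g y)) ->
  (forall r r', ele (Fin r) phi -> r' < r -> exists y, ele (g y) (Fin (- r'))) ->
  inf_over (fun _ => True) g = Eopp phi.
Proof.
  intros Hweak Hstrong. apply Einf_unique. split.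
  { intros e [y [_ ->]]. apply Hweak. }
  intros u Hu.
  assert (Hbelow : forall r r', ele (Fin r) phi -> r' < r -> ele u (Fin (- r'))).
  { intros r r' Hr Hlt. destruct (Hstrong r r' Hr Hlt) as [y Hy].
    apply ele_trans with (g y); [apply Hu; exists y; auto | exact Hy]. }
  destruct phi as [p| |]; simpl; [| |apply ele_PInf].
  - destruct u as [r| |]; simpl; auto.
    + destruct (Rle_or_lt r (- p)) as [|Hr]; auto.
      specialize (Hbelow p (p - (r + p) / 2) (Rle_refl p) ltac:(lra)). simpl in Hbelow. lra.
    + exact (Hbelow p (p - 1) (Rle_refl p) ltac:(lra)).
  - destruct u as [r| |]; simpl; auto.
    + specialize (Hbelow (- r + 2) (- r + 1) I ltac:(lra)). simpl in Hbelow. lra.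
    + exact (Hbelow 1 0 I ltac:(lra)).
Qed.

(* Vectors of R^n are functions [nat -> R] of which only the first n
   coordinates matter. *)
Fixpoint sumn (n : nat) (f : nat -> R) : R :=
  match n with O => 0 | S k => sumn k f + f k end.

Definition dot (n : nat) (u w : nat -> R) : R := sumn n (fun i => u i * w i).
Definition normsq (n : nat) (u : nat -> R) : R := dot n u u.
Definition comb (t : R) (u w : nat -> R) : nat -> R := fun i => t * u i + (1 - t) * w i.

Lemma sumn_ext n f g : (forall i, (i < n)%nat -> f i = g i) -> sumn n f = sumn n g.
Proof.
  induction n; simpl; intros H; auto.
  rewrite IHn, H; auto; intros; apply H; lia.
Qed.

Lemma sumn_plus n f g : sumn n (fun i => f i + g i) = sumn n f + sumn n g.
Proof. induction n; simpl; [ring|]. rewrite IHn; ring. Qed.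

Lemma sumn_sub n f g : sumn n (fun i => f i - g i) = sumn n f - sumn n g.
Proof. induction n; simpl; [ring|]. rewrite IHn; ring. Qed.

Lemma sumn_scal n c f : sumn n (fun i => c * f i) = c * sumn n f.
Proof. induction n; simpl; [ring|]. rewrite IHn; ring. Qed.

Lemma sumn_nonneg n f : (forall i, (i < n)%nat -> 0 <= f i) -> 0 <= sumn n f.
Proof.
  induction n; simpl; intros H; [lra|].
  assert (0 <= f n) by (apply H; lia).
  assert (0 <= sumn n f) by (apply IHn; intros; apply H; lia). lra.
Qed.

Lemma sumn_term n f i : (forall j, (j < n)%nat -> 0 <= f j) -> (i < n)%nat -> f i <= sumn n f.
Proof.
  induction n; simpl; intros H Hi; [lia|].
  assert (0 <= f n) by (apply H; lia).
  assert (0 <= sumn n f) by (apply sumn_nonneg; intros; apply H; lia).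
  destruct (Nat.eq_dec i n); [subst; lra|].
  assert (f i <= sumn n f) by (apply IHn; [intros; apply H; lia | lia]). lra.
Qed.

Lemma cv_const c : Un_cv (fun _ => c) c.
Proof. intros e He. exists O. intros. unfold Rdist. rewrite Rminus_diag, Rabs_R0; auto. Qed.

Lemma sumn_cv n (a : nat -> nat -> R) (l : nat -> R) :
  (forall i, (i < n)%nat -> Un_cv (fun k => a k i) (l i)) ->
  Un_cv (fun k => sumn n (a k)) (sumn n l).
Proof.
  induction n; simpl; intros H; [apply cv_const|].
  apply CV_plus; [apply IHn; intros; apply H; lia | apply H; lia].
Qed.

Lemma cv_ge (a : nat -> R) l c : Un_cv a l -> (forall k, c <= a k) -> c <= l.
Proof.
  intros Hc Hk. destruct (Rle_or_lt c l); auto.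
  destruct (Hc (c - l)) as [N HN]; [lra|].
  specialize (HN N (le_n _)). specialize (Hk N). unfold Rdist in HN.
  apply Rabs_def2 in HN. lra.
Qed.

Lemma quadratic_first_order A B : 0 <= B ->
  (forall t, 0 < t <= 1 -> 0 <= 2 * t * A + t * t * B) -> 0 <= A.
Proof.
  intros HB H. destruct (Rle_or_lt 0 A); auto.
  set (t := - A / (B - A)).
  assert (Hd : 0 < B - A) by lra.
  assert (Ht0 : 0 < t) by (unfold t; apply Rdiv_lt_0_compat; lra).
  assert (Ht1 : t <= 1).
  { unfold t. apply (Rmult_le_reg_r (B - A)); auto. field_simplify; lra. }
  assert (HtB : t * B <= - A).
  { unfold t. apply (Rmult_le_reg_r (B - A)); auto. field_simplify; try lra. nra. }
  specialize (H t (conj Ht0 Ht1)). nra.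
Qed.

Lemma inv_succ_le k N : (0 < N)%nat -> (N <= k)%nat -> / (INR k + 1) <= / INR N.
Proof.
  intros HN Hk. apply Rinv_le_contravar; [apply lt_0_INR; lia|].
  apply le_INR in Hk. lra.
Qed.

(* A minimizing sequence for the norm on a convex set of R^n converges,
   and its limit p is the closest point to the origin of the closure:
   |p|^2 = d and d <= <p, u> for every u in the set. *)
Section ClosestPoint.
Variables (n : nat) (S : (nat -> R) -> Prop).
Hypothesis S_convex : forall u w t, 0 <= t <= 1 -> S u -> S w -> S (comb t u w).
Variable d : R.
Hypothesis d_lower : forall u, S u -> d <= normsq n u.
Variable us : nat -> nat -> R.
Hypothesis us_in : forall k, S (us k).
Hypothesis us_min : forall k, normsq n (us k) < d + / (INR k + 1).

(* Parallelogram law: the midpoint of two terms lies in S. *)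
Lemma minimizing_coord_close k m i : (i < n)%nat ->
  (us k i - us m i) * (us k i - us m i) <= 2 * / (INR k + 1) + 2 * / (INR m + 1).
Proof.
  intros Hi. pose proof (us_min k). pose proof (us_min m).
  set (a := us k) in *. set (b := us m) in *.
  assert (Hmid : d <= normsq n (comb (1/2) a b)).
  { apply d_lower, S_convex; [lra | apply us_in | apply us_in]. }
  assert (Hpar : normsq n (fun j => a j - b j) =
     2 * normsq n a + 2 * normsq n b + (-4) * normsq n (comb (1/2) a b)).
  { unfold normsq, dot, comb. rewrite <- !sumn_scal, <- !sumn_plus.
    apply sumn_ext; intros; field. }
  assert ((a i - b i) * (a i - b i) <= normsq n (fun j => a j - b j)).
  { apply (sumn_term n (fun j => (a j - b j) * (a j - b j))); [|exact Hi].
    intros j _. apply Rle_0_sqr. }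
  lra.
Qed.

Lemma minimizing_coord_cv i : (i < n)%nat -> exists l, Un_cv (fun k => us k i) l.
Proof.
  intros Hi. destruct (R_complete (fun k => us k i)) as [l Hl]; [|exists l; exact Hl].
  intros e He. destruct (archimed_cor1 (e * e / 4)) as [N [HN HN0]]; [nra|].
  exists N. intros k m Hk Hm. unfold Rdist.
  pose proof (minimizing_coord_close k m i Hi).
  pose proof (inv_succ_le k N HN0 Hk). pose proof (inv_succ_le m N HN0 Hm).
  assert (Hsq : (us k i - us m i) * (us k i - us m i) < e * e) by lra.
  unfold Rabs; destruct (Rcase_abs (us k i - us m i)); nra.
Qed.

Definition limit_point (i : nat) : R :=
  epsilon (inhabits 0) (fun l => Un_cv (fun k => us k i) l).

Lemma limit_point_cv i : (i < n)%nat -> Un_cv (fun k => us k i) (limit_point i).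
Proof. intros Hi. unfold limit_point. apply epsilon_spec, minimizing_coord_cv, Hi. Qed.

Lemma limit_point_norm : normsq n limit_point = d.
Proof.
  apply UL_sequence with (Un := fun k => normsq n (us k)).
  - unfold normsq, dot. apply (sumn_cv n (fun k i => us k i * us k i)).
    intros i Hi. apply CV_mult; apply limit_point_cv; auto.
  - intros e He. destruct (archimed_cor1 e He) as [N [HN HN0]].
    exists N. intros k Hk. unfold Rdist.
    pose proof (us_min k). pose proof (d_lower _ (us_in k)). pose proof (inv_succ_le k N HN0 Hk).
    rewrite Rabs_right; lra.
Qed.

(* Variational inequality: moving from p towards a point u of S cannot bring
   the norm below d. *)
Lemma limit_point_variational u : S u -> d <= dot n limit_point u.
Proof.
  intros Hu. set (p := limit_point).
  set (A := dot n p (fun i => u i - p i)).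
  set (B := normsq n (fun i => u i - p i)).
  assert (HB : 0 <= B) by (apply sumn_nonneg; intros; apply Rle_0_sqr).
  assert (HA : 0 <= A).
  { apply (quadratic_first_order A B HB). intros t Ht.
    assert (Hge : d <= normsq n (comb t u p)).
    { apply cv_ge with (a := fun k => normsq n (comb t u (us k))).
      - unfold normsq, dot, comb.
        apply (sumn_cv n (fun k i => (t * u i + (1 - t) * us k i) * (t * u i + (1 - t) * us k i))).
        intros i Hi. apply CV_mult; apply CV_plus; try apply cv_const;
          apply CV_mult; try apply cv_const; apply limit_point_cv; auto.
      - intros k. apply d_lower, S_convex; auto. lra. }
    assert (Hexp : normsq n (comb t u p) = normsq n p + 2 * t * A + t * t * B).
    { unfold A, B, normsq, dot, comb. rewrite <- !sumn_scal, <- !sumn_plus.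
      apply sumn_ext; intros; ring. }
    pose proof limit_point_norm. fold p in H. lra. }
  assert (Hsplit : dot n p u = A + normsq n p).
  { unfold A, normsq, dot. rewrite <- sumn_plus. apply sumn_ext; intros; ring. }
  pose proof limit_point_norm. fold p in H. lra.
Qed.
End ClosestPoint.

Lemma separate_from_origin n (S : (nat -> R) -> Prop) eps : 0 < eps ->
  (forall u w t, 0 <= t <= 1 -> S u -> S w -> S (comb t u w)) ->
  (forall u, S u -> exists i, (i < n)%nat /\ eps <= Rabs (u i)) ->
  exists lam delta, 0 < delta /\ forall u, S u -> dot n lam u + delta <= 0.
Proof.
  intros Heps Hconv Hgap.
  destruct (classic (exists u, S u)) as [[u0 Hu0]|Hempty].
  2:{ exists (fun _ => 0), 1. split; [lra|]. intros u Hu; exfalso; eauto. }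
  assert (Hfar : forall u, S u -> eps * eps <= normsq n u).
  { intros u Hu. destruct (Hgap u Hu) as [i [Hi Hei]].
    apply Rle_trans with (u i * u i).
    - unfold Rabs in Hei; destruct (Rcase_abs (u i)); nra.
    - apply (sumn_term n (fun i => u i * u i)); auto. intros; nra. }
  destruct (real_inf (fun r => exists u, S u /\ r = normsq n u) (normsq n u0) (eps * eps))
    as [d [Hd1 Hd2]]; [eauto | intros r [u [Hu ->]]; auto|].
  assert (Hd_lower : forall u, S u -> d <= normsq n u) by (intros u Hu; apply Hd1; eauto).
  assert (Hd_pos : eps * eps <= d) by (apply Hd2; intros r [u [Hu ->]]; auto).
  assert (Happrox : forall k : nat, exists u, S u /\ normsq n u < d + / (INR k + 1)).
  { intros k. apply NNPP. intros Hno.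
    assert (0 < / (INR k + 1)) by (apply Rinv_0_lt_compat; pose proof (pos_INR k); lra).
    assert (d + / (INR k + 1) <= d); [|lra].
    apply Hd2. intros r [u [Hu ->]].
    destruct (Rle_or_lt (d + / (INR k + 1)) (normsq n u)); auto.
    exfalso; eauto. }
  set (us := fun k => epsilon (inhabits (fun _ : nat => 0))
                        (fun u => S u /\ normsq n u < d + / (INR k + 1))).
  assert (Hus : forall k, S (us k) /\ normsq n (us k) < d + / (INR k + 1))
    by (intros k; apply epsilon_spec, Happrox).
  set (p := limit_point us).
  exists (fun i => - p i), d. split; [nra|].
  intros u Hu.
  assert (Hvar : d <= dot n p u).
  { apply (limit_point_variational n S Hconv d Hd_lower us); auto; apply Hus. }
  assert (dot n (fun i => - p i) u = - dot n p u).
  { transitivity ((-1) * dot n p u); [|ring].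
    unfold dot. rewrite <- sumn_scal. apply sumn_ext; intros; ring. }
  lra.
Qed.

(* Maximum and minimum of finitely many reals (with 0, resp. 1, adjoined). *)
Definition lmax {T} (h : T -> R) (l : list T) : R := fold_right (fun t acc => Rmax (h t) acc) 0 l.
Definition lmin {T} (h : T -> R) (l : list T) : R := fold_right (fun t acc => Rmin (h t) acc) 1 l.

Lemma lmax_ge {T} (h : T -> R) l t : In t l -> h t <= lmax h l.
Proof.
  induction l; simpl; intros H; [contradiction|]. destruct H as [<-|H].
  - apply Rmax_l.
  - eapply Rle_trans; [apply IHl; auto | apply Rmax_r].
Qed.

Lemma lmax_lt {T} (h : T -> R) l r : 0 < r -> (forall t, In t l -> h t < r) -> lmax h l < r.
Proof. induction l; simpl; intros H0 H; auto. apply Rmax_lub_lt; auto. Qed.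

Lemma lmin_le {T} (h : T -> R) l t : In t l -> lmin h l <= h t.
Proof.
  induction l; simpl; intros H; [contradiction|]. destruct H as [<-|H].
  - apply Rmin_l.
  - eapply Rle_trans; [apply Rmin_r | apply IHl; auto].
Qed.

Lemma lmin_pos {T} (h : T -> R) l : (forall t, In t l -> 0 < h t) -> 0 < lmin h l.
Proof. induction l; simpl; intros H; [lra|]. apply Rmin_glb_lt; auto. Qed.

Section Weak.
Variables (X Y : VS) (D : Duality X Y).

Lemma pair0r x : pair D x vzero = 0.
Proof. pose proof (pair_addr X Y D x vzero vzero) as H. rewrite vadd0 in H. lra. Qed.

Lemma pair_oppl x y : pair D (vopp x) y = - pair D x y.
Proof.
  pose proof (pair_addl X Y D vzero vzero y) as H0. rewrite vadd0 in H0.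
  pose proof (pair_addl X Y D x (vopp x) y) as H. rewrite vaddN in H. lra.
Qed.

Lemma pair_oppr x y : pair D x (vopp y) = - pair D x y.
Proof. pose proof (pair_addr X Y D x y (vopp y)) as H. rewrite vaddN, pair0r in H. lra. Qed.

Lemma pair_subl z a y : pair D (vadd z (vopp a)) y = pair D z y - pair D a y.
Proof. rewrite pair_addl, pair_oppl; ring. Qed.

Definition ball (a : X) (ys : list Y) (r : R) (z : X) : Prop :=
  forall y, In y ys -> Rabs (pair D z y - pair D a y) < r.

Lemma ball_open a ys r : wopen D (ball a ys r).
Proof.
  intros x Hx. destruct ys as [|y0 ys'].
  { exists nil, 1. split; [lra|]. intros z _ y Hy; destruct Hy. }
  assert (Hr : 0 < r).
  { specialize (Hx y0 (or_introl eq_refl)). pose proof (Rabs_pos (pair D x y0 - pair D a y0)). lra. }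
  set (ys := y0 :: ys') in *.
  set (M := lmax (fun y => Rabs (pair D x y - pair D a y)) ys).
  assert (HM : M < r) by (apply lmax_lt; auto).
  exists ys, (r - M). split; [lra|].
  intros z Hz y Hy. specialize (Hz y Hy). rewrite pair_subl in Hz.
  pose proof (lmax_ge (fun y => Rabs (pair D x y - pair D a y)) ys y Hy) as Hle.
  fold M in Hle. simpl in Hle.
  replace (pair D z y - pair D a y)
    with ((pair D z y - pair D x y) + (pair D x y - pair D a y)) by ring.
  eapply Rle_lt_trans; [apply Rabs_triang|]. lra.
Qed.

Lemma compact_cover (K : X -> Prop) (P : X -> list Y -> R -> Prop) :
  wcompact D K -> (forall a, K a -> exists ys r, 0 < r /\ P a ys r) ->
  exists l : list (X * list Y * R),
    (forall t, In t l -> P (fst (fst t)) (snd (fst t)) (snd t) /\ 0 < snd t) /\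
    forall x, K x -> exists t, In t l /\ ball (fst (fst t)) (snd (fst t)) (snd t) x.
Proof.
  intros HK HP.
  set (I := {t : X * list Y * R | K (fst (fst t)) /\ P (fst (fst t)) (snd (fst t)) (snd t) /\ 0 < snd t}).
  destruct (HK I (fun i => ball (fst (fst (proj1_sig i))) (snd (fst (proj1_sig i))) (snd (proj1_sig i))))
    as [l Hl].
  - intros i. apply ball_open.
  - intros x Hx. destruct (HP x Hx) as [ys [r [Hr HPr]]].
    exists (exist _ (x, ys, r) (conj Hx (conj HPr Hr))). simpl.
    intros y _. rewrite Rminus_diag, Rabs_R0; auto.
  - exists (map (@proj1_sig _ _) l). split.
    + intros t Ht. apply in_map_iff in Ht. destruct Ht as [[t' [H1 [H2 H3]]] [<- _]]. simpl; auto.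
    + intros x Hx. destruct (Hl x Hx) as [i [Hi Hb]]. exists (proj1_sig i). split; auto.
      apply in_map; auto.
Qed.

Lemma local_separation (A V : X -> Prop) a :
  wclosed D V -> (wclosure D A a -> ~ V a) ->
  exists ys r, 0 < r /\ ((forall z, ball a ys (2 * r) z -> ~ A z) \/
                        (forall z, ball a ys (2 * r) z -> ~ V z)).
Proof.
  intros HV Hcl. destruct (classic (wclosure D A a)) as [Hc|Hc].
  - destruct (HV a (Hcl Hc)) as [ys [e [He Hz]]].
    exists ys, (e / 2). split; [lra|]. right. intros z Hb. apply Hz.
    intros y Hy. rewrite pair_subl. specialize (Hb y Hy). lra.
  - apply not_all_ex_not in Hc. destruct Hc as [U Hc].
    apply imply_to_and in Hc. destruct Hc as [HU Hc].
    apply imply_to_and in Hc. destruct Hc as [HUa Hc].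
    destruct (HU a HUa) as [ys [e [He Hz]]].
    exists ys, (e / 2). split; [lra|]. left. intros z Hb HAz. apply Hc. exists z. split; auto.
    apply Hz. intros y Hy. rewrite pair_subl. specialize (Hb y Hy). lra.
Qed.

Lemma finite_separation (K A V : X -> Prop) :
  wcompact D K -> (forall x, A x -> K x) -> wclosed D V ->
  (forall a, K a -> wclosure D A a -> ~ V a) ->
  exists ys eps, 0 < eps /\ forall x v, A x -> V v ->
    exists y, In y ys /\ eps <= Rabs (pair D x y - pair D v y).
Proof.
  intros HK HAK HV Hcl.
  destruct (compact_cover K (fun a ys r => (forall z, ball a ys (2 * r) z -> ~ A z) \/
                                            (forall z, ball a ys (2 * r) z -> ~ V z)) HK)
    as [l [Hl1 Hl2]].
  { intros a Ha. apply local_separation; auto. }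
  set (ys := flat_map (fun t => snd (fst t)) l).
  exists ys, (lmin snd l). split; [apply lmin_pos; intros t Ht; apply (Hl1 t Ht)|].
  intros x v Hx Hv. apply NNPP. intros Hnone.
  destruct (Hl2 x (HAK x Hx)) as [t [Ht Hb]].
  destruct (Hl1 t Ht) as [HPt Hrt].
  pose proof (lmin_le snd l t Ht) as Hmin.
  assert (Hsmall : forall y, In y (snd (fst t)) -> Rabs (pair D x y - pair D v y) < lmin snd l).
  { intros y Hy. destruct (Rlt_or_le (Rabs (pair D x y - pair D v y)) (lmin snd l)); auto.
    exfalso; apply Hnone. exists y; split; auto. apply in_flat_map. exists t; auto. }
  destruct HPt as [HA|HVn].
  - apply (HA x); auto. intros y Hy. specialize (Hb y Hy). lra.
  - apply (HVn v); auto. intros y Hy. specialize (Hb y Hy). specialize (Hsmall y Hy).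
    replace (pair D v y - pair D (fst (fst t)) y) with
      (-(pair D x y - pair D v y) + (pair D x y - pair D (fst (fst t)) y)) by ring.
    eapply Rle_lt_trans; [apply Rabs_triang|]. rewrite Rabs_Ropp. lra.
Qed.

(* A weakly lsc function, nowhere -oo, with domain in a compact set, is
   bounded below: the open sets {f > -k} cover the compact set. *)
Lemma lsc_bounded_below (f : X -> ereal) (K : X -> Prop) :
  (forall x, f x <> NInf) -> wlsc D f -> wcompact D K -> (forall x, dom f x -> K x) ->
  exists m, forall x, ele (Fin m) (f x).
Proof.
  intros Hn Hl HK HdK.
  destruct (HK nat (fun k x => ~ ele (f x) (Fin (- INR k)))) as [l Hcover].
  - intros k. apply (Hl (- INR k)).
  - intros x _. destruct (f x) as [r| |] eqn:E; simpl.
    + destruct (INR_archimed 1 (- r)) as [k Hk]; [lra|]. exists k. lra.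
    + exists O. auto.
    + exfalso; apply (Hn x E).
  - exists (- lmax INR l). intros x. destruct (f x) as [r| |] eqn:E; simpl; auto.
    + assert (Hd : dom f x) by (unfold dom; rewrite E; discriminate).
      destruct (Hcover x (HdK x Hd)) as [k [Hk Hk2]]. rewrite E in Hk2. simpl in Hk2.
      pose proof (lmax_ge INR l k Hk). simpl in *. lra.
    + exact (Hn x E).
Qed.

Lemma interior_misses_closure (A V W : X -> Prop) :
  (forall x, V x -> ~ A x) -> (forall x, W x -> winterior D V x) ->
  forall x, W x -> ~ wclosure D A x.
Proof.
  intros HVA HWi x HWx Hcl. destruct (HWi x HWx) as [U [HU [HUx HUV]]].
  destruct (Hcl U HU HUx) as [z [HUz HAz]]. exact (HVA z (HUV z HUz) HAz).
Qed.
End Weak.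

Section Duality.
Variables (X Y : VS) (D : Duality X Y).

Fixpoint lincomb (n : nat) (lam : nat -> R) (ys : list Y) : Y :=
  match n with
  | O => vzero
  | S k => vadd (lincomb k lam ys) (vscal (lam k) (nth k ys vzero))
  end.

Lemma pair_lincomb x n lam ys :
  pair D x (lincomb n lam ys) = dot n lam (fun i => pair D x (nth i ys vzero)).
Proof. induction n; simpl. apply pair0r. rewrite pair_addr, pair_scalr, IHn. reflexivity. Qed.

Lemma coord_separation (P : X -> X -> R -> Prop) (ys : list Y) (eps : R) :
  0 < eps ->
  (forall x v s x' v' s' t, 0 <= t <= 1 -> P x v s -> P x' v' s' ->
     P (vadd (vscal t x) (vscal (1 - t) x')) (vadd (vscal t v) (vscal (1 - t) v'))
       (t * s + (1 - t) * s')) ->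
  (forall x v s, P x v s ->
     eps <= s \/ exists y, In y ys /\ eps <= Rabs (pair D x y - pair D v y)) ->
  exists w c delta, 0 < delta /\
    forall x v s, P x v s -> pair D x w - pair D v w + c * s + delta <= 0.
Proof.
  intros Heps Hconv Hgap.
  set (n := length ys). set (yi := fun i => nth i ys vzero).
  set (coords := fun x v (s : R) (i : nat) =>
                   if Nat.eqb i n then s else pair D x (yi i) - pair D v (yi i)).
  set (Sset := fun u => exists x v s, P x v s /\ forall i, (i <= n)%nat -> u i = coords x v s i).
  destruct (separate_from_origin (S n) Sset eps Heps) as [lam [delta [Hdelta Hsep]]].
  - intros u w t Ht [x [v [s [HP Hu]]]] [x' [v' [s' [HP' Hw]]]].
    eexists _, _, _. split; [exact (Hconv _ _ _ _ _ _ t Ht HP HP')|].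
    intros i Hi. unfold comb, coords. rewrite Hu, Hw by exact Hi. unfold coords.
    destruct (Nat.eqb i n); [reflexivity|]. rewrite !pair_addl, !pair_scall. ring.
  - intros u [x [v [s [HP Hu]]]]. destruct (Hgap x v s HP) as [Hs|[y [Hy Hey]]].
    + exists n. split; [lia|]. rewrite Hu, Rabs_right; unfold coords; rewrite ?Nat.eqb_refl; auto; lra.
    + destruct (In_nth ys y vzero Hy) as [i [Hi Hiy]].
      exists i. split; [lia|]. rewrite Hu by lia. unfold coords.
      destruct (Nat.eqb_spec i n); [lia|]. unfold yi; rewrite Hiy. exact Hey.
  - exists (lincomb n lam ys), (lam n), delta. split; [exact Hdelta|].
    intros x v s HP.
    assert (Hin : Sset (coords x v s)) by (exists x, v, s; auto).
    assert (Hlast : coords x v s n = s) by (unfold coords; rewrite Nat.eqb_refl; reflexivity).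
    specialize (Hsep _ Hin). unfold dot in Hsep. simpl in Hsep. rewrite Hlast in Hsep.
    rewrite !pair_lincomb. unfold dot. rewrite <- sumn_sub.
    rewrite (sumn_ext n _ (fun i => lam i * coords x v s i)); [lra|].
    intros i Hi. unfold coords. destruct (Nat.eqb_spec i n); [lia|]. unfold yi; ring.
Qed.

Definition dual_objective (f : X -> ereal) (C : X -> Prop) (y : Y) : ereal :=
  Eplus (conjugate D f y) (support D C (vopp y)).

Lemma dual_objective_le (f : X -> ereal) (C : X -> Prop) y beta :
  (forall x, f x <> NInf) ->
  (forall x a v, f x = Fin a -> C v -> pair D x y - a <= pair D v y - beta) ->
  ele (dual_objective f C y) (Fin (- beta)).
Proof.
  intros Hn Hmin. unfold dual_objective.
  destruct (classic (exists x a, f x = Fin a)) as [[x1 [a1 Hx1]]|Hnodom].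
  2:{ replace (conjugate D f y) with NInf; [simpl; auto|].
      apply ele_antisym; [simpl; auto|]. apply Esup_least. intros e [x ->].
      destruct (f x) as [a| |] eqn:E; simpl; auto.
      - exfalso; eauto.
      - exfalso; exact (Hn x E). }
  destruct (classic (exists v, C v)) as [[v1 Hv1]|HnoC].
  2:{ replace (support D C (vopp y)) with NInf; [destruct (conjugate D f y); simpl; auto|].
      apply ele_antisym; [simpl; auto|]. apply Esup_least. intros e [v [Hv _]].
      exfalso; eauto. }
  destruct (real_sup (fun r => exists x a, f x = Fin a /\ r = pair D x y - a)
              (pair D x1 y - a1) (pair D v1 y - beta)) as [sg [Hsg1 Hsg2]].
  { eauto. }
  { intros r [x [a [Hxa ->]]]. apply Hmin; auto. }
  apply ele_trans with (Eplus (Fin sg) (Fin (- sg - beta))); [|simpl; lra].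
  apply Eplus_mono.
  - apply Esup_least. intros e [x ->]. destruct (f x) as [a| |] eqn:E; simpl; auto.
    + assert (pair D x y - a <= sg) by (apply Hsg1; eauto). lra.
    + exact (Hn x E).
  - apply Esup_least. intros e [v [Hv ->]]. simpl. rewrite pair_oppr.
    assert (sg <= pair D v y - beta); [|lra].
    apply Hsg2. intros r [x [a [Hxa ->]]]. apply Hmin; auto.
Qed.

Lemma weak_duality (f : X -> ereal) (C : X -> Prop) y :
  (forall x, f x <> NInf) -> ele (Eopp (inf_over C f)) (dual_objective f C y).
Proof.
  intros Hn. rewrite <- (Eopp_inv (dual_objective f C y)). apply ele_opp, Einf_greatest.
  intros e [x [Hx ->]]. destruct (f x) as [a| |] eqn:E; [| apply ele_PInf | exfalso; exact (Hn x E)].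
  rewrite <- (Eopp_inv (Fin a)). apply ele_opp.
  apply ele_trans with (Eplus (Fin (pair D x y - a)) (Fin (pair D x (vopp y)))).
  { rewrite pair_oppr. simpl. lra. }
  apply Eplus_mono; apply Esup_ub.
  - exists x. rewrite E. reflexivity.
  - exists x. auto.
Qed.

Lemma convex_fun_comb (f : X -> ereal) x z a b t :
  (forall x, f x <> NInf) -> convex_fun f ->
  f x = Fin a -> f z = Fin b -> 0 <= t <= 1 ->
  exists c, f (vadd (vscal t x) (vscal (1 - t) z)) = Fin c /\ c <= t * a + (1 - t) * b.
Proof.
  intros Hn Hcv Ha Hb Ht. specialize (Hcv x z t a b Ht Ha Hb).
  destruct (f (vadd (vscal t x) (vscal (1 - t) z))) as [c| |] eqn:E; simpl in Hcv.
  - eauto.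
  - contradiction.
  - exfalso; eapply Hn; eauto.
Qed.

Section Attainment.
Variables (f : X -> ereal) (K V : X -> Prop).
Hypothesis f_proper : forall x, f x <> NInf.
Hypothesis f_convex : convex_fun f.
Hypothesis K_compact : wcompact D K.
Hypothesis dom_in_K : forall x, dom f x -> K x.
Hypothesis V_closed : wclosed D V.
Hypothesis V_convex : convex_set V.

(* Dual attainment when V meets dom f: separate the (closed) sublevel set
   {f <= r' + eta}, which misses V, from V, using the epigraph coordinate s >= f x - r'; the
   common point x0 of V and dom f forces a negative weight on s, and normalizing it
   gives an affine minorant of f of slope y. *)
Lemma dual_bound_meeting r r' :
  wlsc D f -> (exists x, V x /\ dom f x) ->
  (forall x, V x -> ele (Fin r) (f x)) -> r' < r ->
  exists y, ele (dual_objective f V y) (Fin (- r')).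
Proof.
  intros Hlsc [x0 [Hx0V Hx0d]] HrV Hlt.
  destruct (f x0) as [a0| |] eqn:Ha0; [| exfalso; exact (Hx0d Ha0) | exfalso; exact (f_proper _ Ha0)].
  assert (Hra0 : r <= a0) by (specialize (HrV x0 Hx0V); rewrite Ha0 in HrV; exact HrV).
  set (eta := (r - r') / 2).
  destruct (finite_separation X Y D K (fun x => ele (f x) (Fin (r' + eta))) V K_compact)
    as [ys [eps [Heps Hsep]]]; [| exact V_closed | |].
  { intros x Hx. apply dom_in_K. intros E. rewrite E in Hx. exact Hx. }
  { intros a _ Hcl HVa.
    assert (Hsub : ele (f a) (Fin (r' + eta))).
    { apply NNPP. intros Hout. destruct (Hcl _ (Hlsc (r' + eta)) Hout) as [z [Hz1 Hz2]].
      contradiction. }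
    specialize (HrV a HVa). destruct (f a); simpl in *; unfold eta in *; lra. }
  { set (P := fun x v s => exists a, f x = Fin a /\ V v /\ a - r' <= s).
    destruct (coord_separation P ys (Rmin eps eta)) as [w [c [delta [Hdelta Hw]]]].
    - apply Rmin_pos; auto. unfold eta; lra.
    - intros x v s x' v' s' t Ht [a [Ha [Hv Has]]] [a' [Ha' [Hv' Has']]].
      destruct (convex_fun_comb f x x' a a' t f_proper f_convex Ha Ha' Ht) as [b [Hb Hble]].
      exists b. repeat split; auto. nra.
    - intros x v s [a [Ha [Hv Has]]]. destruct (Rlt_or_le s eta) as [Hs|Hs].
      + right. destruct (Hsep x v) as [y [Hy Hey]]; auto.
        { rewrite Ha; simpl; lra. }
        exists y. split; auto. eapply Rle_trans; [apply Rmin_l | exact Hey].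
      + left. eapply Rle_trans; [apply Rmin_r | exact Hs].
    - assert (Hc : c < 0).
      { assert (HP0 : P x0 x0 (a0 - r')) by (exists a0; repeat split; auto; lra).
        specialize (Hw _ _ _ HP0). nra. }
      exists (vscal (/ - c) w). apply dual_objective_le; auto.
      intros x a v Ha Hv. rewrite !pair_scalr.
      assert (HP : P x v (a - r')) by (exists a; repeat split; auto; lra).
      specialize (Hw _ _ _ HP).
      assert (Hpos : 0 < / - c) by (apply Rinv_0_lt_compat; lra).
      assert (Hdiv : (pair D x w - pair D v w) * / - c <= a - r').
      { replace (a - r') with ((- c) * (a - r') * / - c) by (field; lra).
        apply Rmult_le_compat_r; lra. }
      lra. }
Qed.

(* Dual attainment when V misses the closure of dom f: separate dom f from V
   by w with margin delta, and use a large multiple of w together with a lower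
   bound m of f. *)
Lemma dual_bound_apart m r' :
  ~ (exists x, V x /\ wclosure D (dom f) x) -> (forall x, ele (Fin m) (f x)) ->
  exists y, ele (dual_objective f V y) (Fin (- r')).
Proof.
  intros Hapart Hm.
  destruct (finite_separation X Y D K (dom f) V K_compact dom_in_K V_closed)
    as [ys [eps [Heps Hsep]]].
  { intros a _ Hcl HVa. apply Hapart. eauto. }
  set (P := fun x v (s : R) => dom f x /\ V v /\ s = 0).
  destruct (coord_separation P ys eps Heps) as [w [c [delta [Hdelta Hw]]]].
  - intros x v s x' v' s' t Ht [Hx [Hv Hs]] [Hx' [Hv' Hs']].
    destruct (f x) as [a| |] eqn:Ha; [| exfalso; exact (Hx Ha) | exfalso; exact (f_proper _ Ha)].
    destruct (f x') as [a'| |] eqn:Ha'; [| exfalso; exact (Hx' Ha') | exfalso; exact (f_proper _ Ha')].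
    destruct (convex_fun_comb f x x' a a' t f_proper f_convex Ha Ha' Ht) as [b [Hb _]].
    repeat split; auto.
    + unfold dom. rewrite Hb. discriminate.
    + subst; ring.
  - intros x v s [Hx [Hv _]]. right. apply Hsep; auto.
  - set (t := Rabs (r' - m) / delta).
    assert (Ht0 : 0 <= t) by (apply Rmult_le_pos; [apply Rabs_pos | left; apply Rinv_0_lt_compat; auto]).
    assert (Htd : t * delta = Rabs (r' - m)) by (unfold t; field; lra).
    exists (vscal t w). apply dual_objective_le; auto.
    intros x a v Ha Hv. rewrite !pair_scalr.
    assert (HP : P x v 0) by (repeat split; auto; unfold dom; rewrite Ha; discriminate).
    specialize (Hw _ _ _ HP). specialize (Hm x). rewrite Ha in Hm. simpl in Hm.
    pose proof (Rle_abs (r' - m)). nra.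
Qed.
End Attainment.

Lemma duality_identity (f : X -> ereal) (K V : X -> Prop) :
  (forall x, f x <> NInf) -> convex_fun f -> wlsc D f -> wcompact D K ->
  (forall x, dom f x -> K x) -> wclosed D V -> convex_set V ->
  ((exists x, V x /\ dom f x) \/ ~ (exists x, V x /\ wclosure D (dom f) x)) ->
  inf_over V f = Eopp (inf_over (fun _ : Y => True) (dual_objective f V)) /\
  inf_over V f <> NInf.
Proof.
  intros Hn Hcv Hlsc HK HdK HV HVc Hcase.
  destruct (lsc_bounded_below X Y D f K Hn Hlsc HK HdK) as [m Hm].
  assert (Hm_inf : ele (Fin m) (inf_over V f))
    by (apply Einf_greatest; intros e [x [_ ->]]; apply Hm).
  split; [| intros E; rewrite E in Hm_inf; exact Hm_inf].
  rewrite (inf_over_eq_Eopp (dual_objective f V) (inf_over V f)), Eopp_inv; [reflexivity| |].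
  - intros y. apply weak_duality, Hn.
  - intros r r' Hr Hlt.
    assert (HrV : forall x, V x -> ele (Fin r) (f x))
      by (intros x Hx; apply ele_trans with (inf_over V f); [exact Hr | apply Einf_lb; eauto]).
    destruct Hcase as [Hmeet | Hapart].
    + exact (dual_bound_meeting f K V Hn Hcv HK HdK HV HVc r r' Hlsc Hmeet HrV Hlt).
    + exact (dual_bound_apart f K V Hn Hcv HK HdK HV HVc m r' Hapart Hm).
Qed.
End Duality.

Theorem mainTheorem17 (X Y : VS) (D : Duality X Y) (f : X -> ereal) (V : X -> Prop) :
  (forall x, f x <> NInf) ->
  convex_fun f ->
  wlsc D f ->
  (exists K, wcompact D K /\ forall x, dom f x -> K x) ->
  wclosed D V -> convex_set V ->
  ( ((exists x, V x /\ dom f x) \/ ~ (exists x, V x /\ wclosure D (dom f) x)) ->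
      inf_over V f
        = Eopp (inf_over (fun _ : Y => True)
                  (fun y => Eplus (conjugate D f y) (support D V (vopp y))))
      /\ inf_over V f <> NInf )
  /\
  ( (~ (exists x, V x /\ dom f x) /\ (exists x, V x /\ wclosure D (dom f) x)) ->
      forall W : X -> Prop, wclosed D W -> convex_set W ->
        (forall x, W x -> winterior D V x) ->
        inf_over W f
          = Eopp (inf_over (fun _ : Y => True)
                    (fun y => Eplus (conjugate D f y) (support D W (vopp y))))
        /\ inf_over W f = PInf ).
Proof.
  intros Hn Hcv Hlsc [K [HK HdK]] HV HVc. split.
  - intros Hcase. exact (duality_identity X Y D f K V Hn Hcv Hlsc HK HdK HV HVc Hcase).
  - intros [Hmiss _] W HW HWc HWint.
    assert (HVdom : forall x, V x -> ~ dom f x) by (intros x Hx Hd; apply Hmiss; eauto).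
    assert (HWapart : ~ (exists x, W x /\ wclosure D (dom f) x)).
    { intros [x [HWx Hcl]]. exact (interior_misses_closure X Y D _ _ _ HVdom HWint x HWx Hcl). }
    destruct (duality_identity X Y D f K W Hn Hcv Hlsc HK HdK HW HWc (or_intror HWapart))
      as [Hdual _].
    split; [exact Hdual|].
    apply inf_over_PInf. intros x HWx.
    destruct (HWint x HWx) as [U [_ [HUx HUV]]].
    apply NNPP. exact (HVdom x (HUV x HUx)).
Qed.
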